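(* Let $m\neq 0$ and $k$ be real constants, let $\mathbf{q}_0,\mathbf{p}_0\in\mathbb{R}^3$ with $\mathbf{q}_0\neq 0$, and let $h_0>0$. Run the numerical scheme described in the context and assume that all quantities it produces are well defined for every $n\ge 0$ (all denominators nonzero). Then for every $n\ge 0$, with $q_n=|\mathbf q_n|$ and $S_n=\dfrac{h_n\,\mathbf q_n\cdot\mathbf p_n}{m\,q_n}$, $$\mathbf r_n=\mathbf q_n+\frac{h_n}{2m}\Big(\frac{S_n}{q_n+\sqrt{q_n^2+S_n^2}}-1\Big)\mathbf p_n .$$ (That is, the initialization formula expressing $\mathbf r_0$ through $\mathbf q_0,\mathbf p_0,h_0$ remains valid at every step of the iteration.)
   Context: The scheme is a discretization of the Kepler problem $\dot{\mathbf p}=-k\mathbf q/|\mathbf q|^3$, $\mathbf p=m\dot{\mathbf q}$ in $\mathbb{R}^3$. For a vector $\mathbf v$ write $v=|\mathbf v|$. Initialization: put $q_0=|\mathbf q_0|$, $$S_0=\frac{h_0\,\mathbf q_0\cdot\mathbf p_0}{m\,q_0},\qquad \mathbf r_0=\mathbf q_0+\frac{h_0}{2m}\Big(\frac{S_0}{q_0+\sqrt{q_0^2+S_0^2}}-1\Big)\mathbf p_0,\qquad \mathbf r_1=\mathbf r_0+\frac{h_0\mathbf p_0}{m},$$ and let $\delta\in[0,\pi/2)$ be defined by $\cos 2\delta=\dfrac{r_0^2+\mathbf r_0\cdot\mathbf P_0}{r_0\sqrt{r_0^2+2\mathbf r_0\cdot\mathbf P_0+\mathbf P_0^2}}$, where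 $\mathbf P_0=h_0\mathbf p_0/m$ (equivalently $\cos2\delta=\mathbf r_0\cdot\mathbf r_1/(r_0r_1)$). Iteration: for $n=0,1,2,\dots$, given $\mathbf r_n,\mathbf r_{n+1},\mathbf p_n,h_n$, define $$\mathbf p_{n+1}=\mathbf p_n-\frac{k h_n\,\mathbf r_{n+1}}{r_{n+1}^2 r_n\cos\delta},\qquad h_{n+1}=\frac{h_n}{\dfrac{2r_n\cos2\delta}{r_{n+1}}-1+\dfrac{k h_n^2}{m\,r_{n+1}^2 r_n\cos\delta}},$$ $$\mathbf r_{n+2}=\mathbf r_{n+1}+\frac{h_{n+1}\mathbf p_{n+1}}{m},\qquad \mathbf q_{n+1}=\frac{r_{n+2}\mathbf r_{n+1}+r_{n+1}\mathbf r_{n+2}}{r_{n+1}+r_{n+2}} .$$ The initial $\mathbf q_0$ is the given one. *)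

From Stdlib Require Import Reals Lra.
Open Scope R_scope.

Definition vec3 : Type := (R * R * R)%type.

Definition vadd (u v : vec3) : vec3 :=
  let '(u1, u2, u3) := u in let '(v1, v2, v3) := v in (u1 + v1, u2 + v2, u3 + v3).
Definition vscale (a : R) (v : vec3) : vec3 :=
  let '(v1, v2, v3) := v in (a * v1, a * v2, a * v3).
Definition vdot (u v : vec3) : R :=
  let '(u1, u2, u3) := u in let '(v1, v2, v3) := v in u1 * v1 + u2 * v2 + u3 * v3.
Definition vnorm (v : vec3) : R := sqrt (vdot v v).

Definition Sfun (m : R) (q p : vec3) (h : R) : R := h * vdot q p / (m * vnorm q).

Definition rinit (m : R) (q p : vec3) (h : R) : vec3 :=
  let S := Sfun m q p h in
  vadd q (vscale (h / (2 * m) * (S / (vnorm q + sqrt (vnorm q ^ 2 + S ^ 2)) - 1)) p).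

Definition r0 (m : R) (q0 p0 : vec3) (h0 : R) : vec3 := rinit m q0 p0 h0.
Definition r1 (m : R) (q0 p0 : vec3) (h0 : R) : vec3 :=
  vadd (r0 m q0 p0 h0) (vscale (h0 / m) p0).

Definition cos2delta (m : R) (q0 p0 : vec3) (h0 : R) : R :=
  vdot (r0 m q0 p0 h0) (r1 m q0 p0 h0) / (vnorm (r0 m q0 p0 h0) * vnorm (r1 m q0 p0 h0)).
Definition delta (m : R) (q0 p0 : vec3) (h0 : R) : R := acos (cos2delta m q0 p0 h0) / 2.

(* state at step n : (r_n, r_{n+1}, p_n, h_n) *)
Record state := mkState { st_r : vec3; st_r1 : vec3; st_p : vec3; st_h : R }.

Definition hden (m k c2 cd : R) (s : state) : R :=
  2 * vnorm (st_r s) * c2 / vnorm (st_r1 s) - 1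
  + k * st_h s ^ 2 / (m * vnorm (st_r1 s) ^ 2 * vnorm (st_r s) * cd).

Definition step (m k c2 cd : R) (s : state) : state :=
  let rn := st_r s in let rn1 := st_r1 s in let pn := st_p s in let hn := st_h s in
  let p' := vadd pn (vscale (- (k * hn / (vnorm rn1 ^ 2 * vnorm rn * cd))) rn1) in
  let h' := hn / hden m k c2 cd s in
  let r'' := vadd rn1 (vscale (h' / m) p') in
  mkState rn1 r'' p' h'.

Fixpoint scheme (m k : R) (q0 p0 : vec3) (h0 : R) (n : nat) : state :=
  match n with
  | O => mkState (r0 m q0 p0 h0) (r1 m q0 p0 h0) p0 h0
  | S n' => step m k (cos2delta m q0 p0 h0) (cos (delta m q0 p0 h0))
                 (scheme m k q0 p0 h0 n')
  end.

Definition r_ (m k : R) (q0 p0 : vec3) (h0 : R) (n : nat) : vec3 :=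
  st_r (scheme m k q0 p0 h0 n).
Definition p_ (m k : R) (q0 p0 : vec3) (h0 : R) (n : nat) : vec3 :=
  st_p (scheme m k q0 p0 h0 n).
Definition h_ (m k : R) (q0 p0 : vec3) (h0 : R) (n : nat) : R :=
  st_h (scheme m k q0 p0 h0 n).

Definition q_ (m k : R) (q0 p0 : vec3) (h0 : R) (n : nat) : vec3 :=
  match n with
  | O => q0
  | S n' =>
    let a := r_ m k q0 p0 h0 (S n') in
    let b := r_ m k q0 p0 h0 (S (S n')) in
    vscale (/ (vnorm a + vnorm b)) (vadd (vscale (vnorm b) a) (vscale (vnorm a) b))
  end.

(* The scheme satisfies r_(n+1) = r_n + (h_n/m) p_n, and q_n is the point on the segment
   [r_n, r_(n+1)] dividing it in the ratio |r_n| : |r_(n+1)|, i.e. the bisector point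
   q = (b A + a B)/(a + b) of A = r_n, B = r_(n+1), a = |A|, b = |B|.  A direct computation
   gives 2 a b q.(B - A) = |q|^2 (b^2 - a^2), which says that S_n/|q_n| = 2c/(1 - c^2) with
   c = (b - a)/(a + b).  Inverting this half-angle tangent relation yields
   S/(|q| + sqrt(|q|^2 + S^2)) = c, and with this value of c the initialization formula
   moves q back exactly onto A. *)
From Stdlib Require Import Reals Lra.
Open Scope R_scope.

Lemma vdot_comm u v : vdot u v = vdot v u.
Proof. destruct u as [[u1 u2] u3], v as [[v1 v2] v3]; simpl; ring. Qed.

Lemma vdot_addl u v w : vdot (vadd u v) w = vdot u w + vdot v w.
Proof. destruct u as [[u1 u2] u3], v as [[v1 v2] v3], w as [[w1 w2] w3]; simpl; ring. Qed.

Lemma vdot_addr u v w : vdot u (vadd v w) = vdot u v + vdot u w.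
Proof. rewrite !(vdot_comm u), vdot_addl; reflexivity. Qed.

Lemma vdot_scalel a u v : vdot (vscale a u) v = a * vdot u v.
Proof. destruct u as [[u1 u2] u3], v as [[v1 v2] v3]; simpl; ring. Qed.

Lemma vdot_scaler a u v : vdot u (vscale a v) = a * vdot u v.
Proof. rewrite !(vdot_comm u), vdot_scalel; reflexivity. Qed.

Lemma vdot_self_ge0 v : 0 <= vdot v v.
Proof. destruct v as [[v1 v2] v3]; simpl; nra. Qed.

Lemma vnorm_sqr v : vnorm v ^ 2 = vdot v v.
Proof. unfold vnorm; rewrite <- Rsqr_pow2; apply Rsqr_sqrt, vdot_self_ge0. Qed.

Lemma vnorm_gt0 v : vnorm v <> 0 -> 0 < vnorm v.
Proof. unfold vnorm; pose proof (sqrt_pos (vdot v v)); lra. Qed.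

(* If tan phi = S/Q then the left-hand side is tan (phi/2), and tan phi = 2c/(1 - c^2). *)
Lemma half_angle_tan_inv Q S c :
  0 < Q -> -1 < c < 1 -> S * (1 - c ^ 2) = 2 * Q * c ->
  S / (Q + sqrt (Q ^ 2 + S ^ 2)) = c.
Proof.
  intros HQ Hc HS.
  assert (Hc2 : 0 < 1 - c ^ 2) by nra.
  assert (ES : S = 2 * Q * c / (1 - c ^ 2)) by (rewrite <- HS; field; lra).
  assert (Esqrt : sqrt (Q ^ 2 + S ^ 2) = Q * (1 + c ^ 2) / (1 - c ^ 2)).
  { rewrite <- (sqrt_pow2 (Q * (1 + c ^ 2) / (1 - c ^ 2))).
    - f_equal; rewrite ES; field; lra.
    - apply Rmult_le_pos; [nra | left; apply Rinv_0_lt_compat; lra]. }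
  rewrite Esqrt, ES; field; split; lra.
Qed.

Definition bisector (A B : vec3) : vec3 :=
  vscale (/ (vnorm A + vnorm B)) (vadd (vscale (vnorm B) A) (vscale (vnorm A) B)).

Lemma bisector_shift A d :
  vnorm A + vnorm (vadd A d) <> 0 ->
  bisector A (vadd A d) = vadd A (vscale (vnorm A / (vnorm A + vnorm (vadd A d))) d).
Proof.
  unfold bisector; set (b := vnorm (vadd A d)); set (a := vnorm A); clearbody a b.
  intros Hab; destruct A as [[x y] z], d as [[u v] w]; simpl; f_equal; [f_equal|]; field; lra.
Qed.

Lemma bisector_dot A d :
  0 < vnorm A -> 0 < vnorm (vadd A d) ->
  2 * vnorm A * vnorm (vadd A d) * vdot (bisector A (vadd A d)) d
  = vnorm (bisector A (vadd A d)) ^ 2 * (vnorm (vadd A d) ^ 2 - vnorm A ^ 2).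
Proof.
  intros Ha Hb.
  rewrite vnorm_sqr, bisector_shift by lra.
  assert (Eb : vnorm (vadd A d) ^ 2 = vdot A A + 2 * vdot A d + vdot d d).
  { rewrite vnorm_sqr, !vdot_addl, !vdot_addr, (vdot_comm d A); ring. }
  assert (Ea : vdot A A = vnorm A ^ 2) by (rewrite vnorm_sqr; reflexivity).
  rewrite !vdot_addl, !vdot_addr, !vdot_scalel, !vdot_scaler, (vdot_comm d A).
  set (a := vnorm A) in *; set (b := vnorm (vadd A d)) in *; clearbody a b.
  assert (Edd : vdot d d = b ^ 2 - a ^ 2 - 2 * vdot A d) by lra.
  rewrite Edd, Ea; field; lra.
Qed.

Lemma Sfun_scale m q p h :
  m <> 0 -> vnorm q <> 0 -> Sfun m q p h = vdot q (vscale (h / m) p) / vnorm q.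
Proof. intros Hm Hq; unfold Sfun; rewrite vdot_scaler; field; auto. Qed.

Lemma rinit_bisector m h A p :
  m <> 0 -> vnorm A <> 0 -> vnorm (vadd A (vscale (h / m) p)) <> 0 ->
  vnorm (bisector A (vadd A (vscale (h / m) p))) <> 0 ->
  rinit m (bisector A (vadd A (vscale (h / m) p))) p h = A.
Proof.
  intros Hm HA HB Hq.
  apply vnorm_gt0 in HA, HB, Hq.
  pose proof (bisector_dot A (vscale (h / m) p) HA HB) as Edot.
  assert (Eshift := bisector_shift A (vscale (h / m) p)).
  unfold rinit; rewrite (Sfun_scale m) by lra.
  set (q := bisector A _) in *.
  set (a := vnorm A) in *; set (b := vnorm (vadd A _)) in *; set (Q := vnorm q) in *.
  set (D := vdot q _) in *.
  assert (Hhalf : D / Q / (Q + sqrt (Q ^ 2 + (D / Q) ^ 2)) = (b - a) / (a + b)).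
  { apply half_angle_tan_inv; [lra | |].
    - assert (0 < a / (a + b)) by (apply Rdiv_lt_0_compat; lra).
      assert (0 < b / (a + b)) by (apply Rdiv_lt_0_compat; lra).
      assert (a / (a + b) + b / (a + b) = 1) by (field; lra).
      replace ((b - a) / (a + b)) with (b / (a + b) - a / (a + b)) by (field; lra).
      lra.
    - replace D with (Q ^ 2 * (b ^ 2 - a ^ 2) / (2 * a * b)) by (rewrite <- Edot; field; lra).
      field; lra. }
  rewrite Hhalf, Eshift by lra.
  clearbody a b; destruct A as [[x y] z], p as [[u v] w]; simpl.
  f_equal; [f_equal|]; field; lra.
Qed.

Lemma r_succ m k q0 p0 h0 n :
  r_ m k q0 p0 h0 (S n)
  = vadd (r_ m k q0 p0 h0 n) (vscale (h_ m k q0 p0 h0 n / m) (p_ m k q0 p0 h0 n)).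
Proof. destruct n; reflexivity. Qed.

Theorem mainTheorem5 (m k : R) (q0 p0 : vec3) (h0 : R) :
  m <> 0 -> q0 <> (0, 0, 0) -> 0 < h0 ->
  (* well-definedness: all denominators of the scheme are nonzero *)
  cos (delta m q0 p0 h0) <> 0 ->
  (forall n, vnorm (r_ m k q0 p0 h0 n) <> 0) ->
  (forall n, hden m k (cos2delta m q0 p0 h0) (cos (delta m q0 p0 h0))
               (scheme m k q0 p0 h0 n) <> 0) ->
  (forall n, vnorm (q_ m k q0 p0 h0 n) <> 0) ->
  forall n, r_ m k q0 p0 h0 n = rinit m (q_ m k q0 p0 h0 n) (p_ m k q0 p0 h0 n) (h_ m k q0 p0 h0 n).
Proof.
  intros Hm _ _ _ Hr _ Hq [|n]; [reflexivity|].
  specialize (Hq (S n)); pose proof (Hr (S (S n))) as Hr2; specialize (Hr (S n)).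
  change (q_ m k q0 p0 h0 (S n))
    with (bisector (r_ m k q0 p0 h0 (S n)) (r_ m k q0 p0 h0 (S (S n)))) in *.
  rewrite (r_succ m k q0 p0 h0 (S n)) in *.
  symmetry; apply rinit_bisector; assumption.
Qed.
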